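(* Let $m\in\mathbb N$, let $M_1,M_2\in{\rm Mat}_m(\mathbb Z)$, and let $S\in{\rm Mat}_m(\mathbb Z)\cap GL_m(\mathbb Q)$ satisfy $M_2=S^{-1}M_1S$. Then for every $n\in\mathbb N$ with $\gcd(n,\det(S))=1$, the move graphs $\Gamma_{M_1,\,n}$ and $\Gamma_{M_2,\,n}$ are isomorphic.
   Context: $\mathbb N$ is the set of positive integers and $\mathbb Z_n$ the integers modulo $n$. $GL_m(\mathbb Q)$ denotes the invertible $m\times m$ rational matrices. For $M\in{\rm Mat}_m(\mathbb Z)$, the move graph $\Gamma_{M,\,n}$ is the directed graph with vertex set $\mathbb Z_n^m$ and arc set $\{({\bf x},{\bf y}) : {\bf y}^T=M{\bf x}^T \text{ in } \mathbb Z_n^m\}$ (loops allowed). *)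

From HB Require Import structures.
From mathcomp Require Import all_boot all_order all_algebra.
Set Implicit Arguments. Unset Strict Implicit. Unset Printing Implicit Defensive.
Import Order.TTheory GRing.Theory Num.Theory.
Local Open Scope ring_scope.

(* Vertices of the move graph: vectors in (Z_n)^m, represented as finite
   functions 'I_m -> 'I_n (residues 0..n-1); this also works for n = 1. *)
Definition vertex (m n : nat) := {ffun 'I_m -> 'I_n}.

(* Arc (x, y) of Gamma_{M,n}:  y^T = M x^T in Z_n^m, i.e. for each i,
   y_i is the residue mod n of sum_j M_ij x_j. *)
Definition move_arc (m n : nat) (M : 'M[int]_m) : rel (vertex m n) :=
  fun x y => [forall i : 'I_m,
    ((nat_of_ord (y i))%:Z == ((\sum_(j < m) M i j * (nat_of_ord (x j))%:Z) %% n%:Z)%Z)].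

Definition digraph_iso (V W : finType) (e1 : rel V) (e2 : rel W) : Prop :=
  exists f : V -> W, bijective f /\ forall x y, e1 x y = e2 (f x) (f y).

Definition mxQ (m : nat) (A : 'M[int]_m) : 'M[rat]_m := map_mx (fun z : int => z%:~R) A.

(* Conjugation by S over Q yields the integral intertwining relation
   adj(S) M1 = M2 adj(S), and S adj(S) = det(S) I.  Since det(S) is a unit
   mod n, multiplication by adj(S) is injective on (Z/nZ)^m, so
   x |-> adj(S) x (mod n) is a bijection of vertices carrying the arc
   y = M1 x to the arc adj(S) y = M2 adj(S) x, and back. *)
From HB Require Import structures.
From mathcomp Require Import all_boot all_order all_algebra.
Import Order.TTheory GRing.Theory Num.Theory.
Local Open Scope ring_scope.
Set Implicit Arguments. Unset Strict Implicit.

Section CongruenceMx.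

Variable d : int.

Definition congrmx p q (u v : 'M[int]_(p, q)) : Prop :=
  forall i j, (d %| u i j - v i j)%Z.

Lemma congrmx_sym p q (u v : 'M[int]_(p, q)) : congrmx u v -> congrmx v u.
Proof. by move=> Huv i j; rewrite -opprB rpredN. Qed.

Lemma congrmx_trans p q (u v w : 'M[int]_(p, q)) :
  congrmx u v -> congrmx v w -> congrmx u w.
Proof. by move=> Huv Hvw i j; rewrite -(subrKA (v i j)) rpredD. Qed.

Lemma congrmx_mull p q r (A : 'M[int]_(r, p)) (u v : 'M[int]_(p, q)) :
  congrmx u v -> congrmx (A *m u) (A *m v).
Proof.
move=> Huv i j; rewrite !mxE -sumrB rpred_sum // => k _.
by rewrite -mulrBr dvdz_mull.
Qed.

Lemma congrmx_cancel p q r (A : 'M[int]_(r, p)) (B : 'M[int]_(p, r)) (c : int)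
    (u v : 'M[int]_(p, q)) :
  coprimez d c -> B *m A = c%:M ->
  congrmx (A *m u) (A *m v) -> congrmx u v.
Proof.
move=> cop_dc BA /(congrmx_mull B) H i j; have := H i j.
by rewrite !mulmxA BA !mul_scalar_mx !mxE -mulrBr (Gauss_dvdzr _ cop_dc).
Qed.

End CongruenceMx.

Section MoveGraph.

Variable m : nat.

Definition vec_of_vertex n (x : vertex m n) : 'cV[int]_m := \col_i (x i)%:Z.

Lemma move_arcP n (M : 'M[int]_m) (x y : vertex m n) :
  reflect (congrmx n (vec_of_vertex y) (M *m vec_of_vertex x)) (move_arc M x y).
Proof.
have entryE i j : (n%:Z %| vec_of_vertex y i j - (M *m vec_of_vertex x) i j)%Z
    = ((y i)%:Z == (\sum_(k < m) M i k * (x k)%:Z) %% n%:Z)%Z.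
  rewrite -eqz_mod_dvd !mxE modz_small ?ltz_nat ?ltn_ord //.
  by congr (_ == (_ %% _)%Z); apply: eq_bigr => k _; rewrite mxE.
apply: (iffP forallP) => H i; first by move=> j; rewrite entryE.
by rewrite -(entryE i ord0); apply: H.
Qed.

Lemma vec_of_vertex_inj n (x y : vertex m n) :
  congrmx n (vec_of_vertex x) (vec_of_vertex y) -> x = y.
Proof.
move=> Hxy; apply/ffunP => i; apply/val_inj/eqP.
by have := Hxy i 0; rewrite -eqz_mod_dvd !mxE !modz_small ?ltz_nat ?ltn_ord.
Qed.

Definition vertex_of_vec n' (v : 'cV[int]_m) : vertex m n'.+1 :=
  [ffun i => inord `|(v i ord0 %% n'.+1)%Z|].

Lemma vertex_of_vecK n' (v : 'cV[int]_m) :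
  congrmx n'.+1 (vec_of_vertex (vertex_of_vec n' v)) v.
Proof.
move=> i j; rewrite (ord1 j) -eqz_mod_dvd !mxE ffunE.
have mod_ge0 : 0 <= (v i ord0 %% n'.+1)%Z by rewrite modz_ge0.
rewrite inordK ?gez0_abs ?modz_mod // -ltz_nat gez0_abs //.
exact: ltz_pmod.
Qed.

Lemma move_graph_iso_intertwine n (M1 M2 A B : 'M[int]_m) (c : int) :
  (0 < n)%N -> coprime n `|c| -> B *m A = c%:M -> A *m M1 = M2 *m A ->
  digraph_iso (@move_arc m n M1) (@move_arc m n M2).
Proof.
case: n => [//|n'] _ cop_nc BA AM.
have cancelA u v := @congrmx_cancel n'.+1 _ 1 _ A B c u v cop_nc BA.
pose f (x : vertex m n'.+1) := vertex_of_vec n' (A *m vec_of_vertex x).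
have fK x : congrmx n'.+1 (vec_of_vertex (f x)) (A *m vec_of_vertex x).
  exact: vertex_of_vecK.
exists f; split.
  apply: injF_bij => x y fxy; apply/vec_of_vertex_inj/cancelA.
  by apply: congrmx_trans (congrmx_sym (fK x)) _; rewrite fxy.
move=> x y; apply/move_arcP/move_arcP => Hxy.
- apply: congrmx_trans (fK y) _; apply: congrmx_trans (congrmx_mull A Hxy) _.
  by rewrite mulmxA AM -mulmxA; apply/congrmx_mull/congrmx_sym.
- apply: cancelA; rewrite mulmxA AM -mulmxA.
  apply: congrmx_trans (congrmx_sym (fK y)) _; apply: congrmx_trans Hxy _.
  exact: congrmx_mull.
Qed.

End MoveGraph.

Lemma mxQ_inj m : injective (@mxQ m).
Proof.
move=> A B AB; apply/matrixP => i j.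
by have /matrixP/(_ i j) := AB; rewrite !mxE => /intr_inj.
Qed.

Lemma mxQM m (A B : 'M[int]_m) : mxQ (A *m B) = mxQ A *m mxQ B.
Proof. exact: map_mxM. Qed.

Lemma adj_intertwine m (M1 M2 S : 'M[int]_m) :
  mxQ S \in unitmx -> mxQ M2 = invmx (mxQ S) *m mxQ M1 *m mxQ S ->
  \adj S *m M1 = M2 *m \adj S.
Proof.
move=> S_unit M2E; apply: mxQ_inj; rewrite !mxQM [mxQ _]map_mx_adj.
have -> : \adj (mxQ S) = \det (mxQ S) *: invmx (mxQ S).
  by rewrite /invmx S_unit scalerA mulfV ?scale1r // -unitfE -unitmxE.
by rewrite M2E -scalemxAl -scalemxAr -!mulmxA mulmxV ?mulmx1.
Qed.

Theorem theorem3p5 (m : nat) (M1 M2 S : 'M[int]_m) :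
  (0 < m)%N ->
  mxQ S \in unitmx ->
  mxQ M2 = invmx (mxQ S) *m mxQ M1 *m mxQ S ->
  forall n : nat, (0 < n)%N -> coprime n `|\det S|%N ->
    digraph_iso (@move_arc m n M1) (@move_arc m n M2).
Proof.
move=> _ S_unit M2E n n_gt0 cop_n_detS.
apply: (move_graph_iso_intertwine n_gt0 cop_n_detS (mul_mx_adj S)).
exact: adj_intertwine.
Qed.
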